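(* Let $T$ be a binary tree rooted at $O$, and let $p\in(0,1]$ be the common activation probability of all edges. Against every depth-first strategy $s$ of the searcher, the equal branching density $\varepsilon^*$ of the hider yields the same payoff, namely $$g(\varepsilon^*,s)=\frac12\tau(O)+\Lambda(O).$$
   Context: Setting: the stochastic search game on a finite tree $T$ rooted at $O$. Every edge has length $1$ and is active at each stage independently with the same probability $p\in(0,1]$. The hider picks an edge and stays there. The searcher, starting at $O$ and observing which edges are currently active, at each stage either waits or traverses an active edge incident to her position. The hider's payoff $g(\varepsilon,s)$ is the expected first time the searcher traverses the hider's edge. Orient the edges away from $O$. For a vertex $v$, $T_v$ is the subtree rooted at $v$ consisting of all edges below $v$. For an edge $e=(u,w)$, $T_e$ is $\{e\}\cup T_w$, rooted at $u$, and $E_e$ is its edge set. A leaf edge is an edge whose head has no outgoing edge. $T$ is binary if every vertex has at most two outgoing edges. A depth-first strategy (DFS) acts as follows at the searcher's current vertex: - if some untraversed outgoing edge is active, traverse one of them (possibly chosen at random); - if all untraversed outgoing edges are inactive, wait; - if all outgoing edges have been traversed, traverse the edge back toward $O$ if it is active, and wait otherwise. Cycle time: for a vertex or edge $z$, $\tau(z)$ is the expected time for a DFS on $T_z$, started at its root, to traverse every edge of $T_z$ and return to the root. It does not depend on the DFS. Equivalently, for binary trees: - $\tau(v)=0$ if $v$ has no outgoing edge; - $\tau(e)=\tau(w)+2/p$ for $e=(u,w)$; - $\tau(v)=\tau(e)$ if $v$ has exactly one outgoing edge $e$; - $\tau(v)=\tau(w_1)+\tau(w_2)+3/p+1/(1-(1-p)^2)$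 if $v$ has outgoing edges to $w_1,w_2$. The equal branching density $\varepsilon^*$ is the unique probability distribution on $E$ such that: - it is supported on the leaf edges; - at every vertex with two outgoing edges $e_1,e_2$, $\varepsilon^*(E_{e_1})/\tau(e_1)=\varepsilon^*(E_{e_2})/\tau(e_2)$. The function $\Lambda$ is defined recursively on rooted binary trees. Write $\Lambda(v)=\Lambda(T_v)$ and $\Lambda(e)=\Lambda(T_e)$. - $\Lambda(v)=0$ if $v$ has no outgoing edge. - If the root $r$ has a single outgoing edge $e=(r,w)$, then $\Lambda(r)=\Lambda(e)=\Lambda(w)$. - If $r$ has two outgoing edges $e_1=(r,w_1)$ and $e_2=(r,w_2)$, then $$\Lambda(r)=\frac{\tau(e_1)}{\tau(e_1)+\tau(e_2)}\Lambda(w_1)+\frac{\tau(e_2)}{\tau(e_1)+\tau(e_2)}\Lambda(w_2)+\frac12\Big(\frac1{1-(1-p)^2}-\frac1p\Big).$$ *)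

From Stdlib Require Import Reals List Bool.
Import ListNotations.
Open Scope R_scope.

Inductive btree : Type :=
| Nd0 : btree
| Nd1 : btree -> btree
| Nd2 : btree -> btree -> btree.

(* Vertices are addressed by the path from the root O = [] ; the only child
   of an Nd1 vertex is reached by [false], the two children of an Nd2 vertex
   by [false] / [true].  An edge (u,w) is identified by the address of its
   head w (a nonempty address); its tail is [removelast w]. *)
Definition addr := list bool.
Definition addr_eq_dec : forall a b : addr, {a = b} + {a <> b} :=
  list_eq_dec bool_dec.

Fixpoint edges (t : btree) : list addr :=
  match t with
  | Nd0 => []
  | Nd1 u => [false] :: map (cons false) (edges u)
  | Nd2 l r => [false] :: [true] :: map (cons false) (edges l)
                 ++ map (cons true) (edges r)
  end.

Fixpoint subtree_at (t : btree) (v : addr) : option btree :=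
  match v, t with
  | [], _ => Some t
  | false :: a, Nd1 u => subtree_at u a
  | false :: a, Nd2 l _ => subtree_at l a
  | true :: a, Nd2 _ r => subtree_at r a
  | _, _ => None
  end.

Definition children (T : btree) (v : addr) : list addr :=
  match subtree_at T v with
  | Some (Nd1 _) => [v ++ [false]]
  | Some (Nd2 _ _) => [v ++ [false]; v ++ [true]]
  | _ => []
  end.

Fixpoint sumR (l : list R) : R :=
  match l with [] => 0 | x :: l' => x + sumR l' end.

Fixpoint subsets {X : Type} (l : list X) : list (list X) :=
  match l with
  | [] => [[]]
  | x :: l' => map (cons x) (subsets l') ++ subsets l'
  end.

Definition inb (x : addr) (l : list addr) : bool :=
  if in_dec addr_eq_dec x l then true else false.

Definition act_weight (p : R) (E A : list addr) : R :=
  fold_right Rmult 1 (map (fun e => if inb e A then p else 1 - p) E).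

(* history: for each stage so far (most recent first), the searcher's position
   at the start of the stage and the set of active edges at that stage *)
Definition history := list (addr * list addr).

Inductive move : Type :=
| Wait : move
| Down : addr -> move
| Up : move
| Choose : addr -> addr -> move.

Definition dfs_move (T : btree) (v : addr) (trav : list addr) (A : list addr)
  : move :=
  match filter (fun c => negb (inb c trav)) (children T v) with
  | [] => match v with
          | [] => Wait
          | _ => if inb v A then Up else Wait
          end
  | U => match filter (fun c => inb c A) U with
         | [] => Wait
         | [c] => Down c
         | c1 :: c2 :: _ => Choose c1 c2
         end
  end.

(* A (behavioural) DFS is given by sigma : history -> [0,1], the probability of
   taking the first of two active untraversed outgoing edges.
   notfound ... e n h v trav = probability that, from the given situation, the
   searcher does not traverse the hider's edge e during the next n stages. *)
Fixpoint notfound (T : btree) (p : R) (sigma : history -> R) (e : addr)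
  (n : nat) (h : history) (v : addr) (trav : list addr) : R :=
  match n with
  | O => 1
  | S n' =>
    sumR (map (fun A =>
      act_weight p (edges T) A *
      (let h' := (v, A) :: h in
       let go c := if addr_eq_dec c e then 0
                   else notfound T p sigma e n' h' c (c :: trav) in
       match dfs_move T v trav A with
       | Wait => notfound T p sigma e n' h' v trav
       | Down c => go c
       | Up => notfound T p sigma e n' h' (removelast v) trav
       | Choose c1 c2 => sigma h' * go c1 + (1 - sigma h') * go c2
       end)) (subsets (edges T)))
  end.

(* P(time > n) for the hider mixed strategy eps; the payoff g(eps,s) is the
   sum over n >= 0 of these (E[X] = sum_n P(X > n) for X >= 1 integer). *)
Definition payoff_tail (T : btree) (p : R) (sigma : history -> R)
  (eps : addr -> R) (n : nat) : R :=
  sumR (map (fun e => eps e * notfound T p sigma e n [] [] []) (edges T)).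

Fixpoint tau (p : R) (t : btree) : R :=
  match t with
  | Nd0 => 0
  | Nd1 u => tau p u + 2 / p
  | Nd2 l r => tau p l + tau p r + 3 / p + 1 / (1 - (1 - p) ^ 2)
  end.

Fixpoint Lambda (p : R) (t : btree) : R :=
  match t with
  | Nd0 => 0
  | Nd1 u => Lambda p u
  | Nd2 l r =>
    let t1 := tau p l + 2 / p in
    let t2 := tau p r + 2 / p in
    t1 / (t1 + t2) * Lambda p l + t2 / (t1 + t2) * Lambda p r
    + / 2 * (1 / (1 - (1 - p) ^ 2) - 1 / p)
  end.

Definition subtree_edges (T : btree) (e : addr) : list addr :=
  filter (fun a => if addr_eq_dec (firstn (length e) a) e then true else false)
    (edges T).

Definition is_leaf_edge (T : btree) (e : addr) : Prop :=
  subtree_at T e = Some Nd0.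

Definition equal_branching_density (T : btree) (p : R) (eps : addr -> R) : Prop :=
  (forall e, In e (edges T) -> 0 <= eps e) /\
  sumR (map eps (edges T)) = 1 /\
  (forall e, In e (edges T) -> ~ is_leaf_edge T e -> eps e = 0) /\
  (forall v l r, subtree_at T v = Some (Nd2 l r) ->
     sumR (map eps (subtree_edges T (v ++ [false]))) / (tau p l + 2 / p)
     = sumR (map eps (subtree_edges T (v ++ [true]))) / (tau p r + 2 / p)).

From Stdlib Require Import Reals List Lra Lia Bool.
Import ListNotations.
Open Scope R_scope.

(* The payoff is the series of the tails P(time > n), and P(time > n) is the
   expected eps*-mass of the edges still untraversed after n stages.  The proof
   is a potential-function argument on the (position, traversed edges) process
   of a DFS:

   - [tour_cost t a] is the expected eps*-weighted finding time of a DFS tour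
     of the subtree t at address a; the equal branching condition gives it the
     closed form mass * (tau/2 + Lambda) ([tour_cost_closed_form]) and makes
     it indifferent to which branch is toured first.
   - [potential v tr] combines the tour costs of the still unfinished subtrees
     along the path from O to v.  It satisfies the Bellman equation
     potential = remaining mass + E[potential after one stage] ([bellman]),
     equals tau(O)/2 + Lambda(O) at the start, and is bounded by a constant
     times the remaining mass ([potential_bounds]).
   - Iterating the Bellman equation telescopes the partial sums of the tails
     ([potential_telescoping]); the bound forces the leftover term to vanish
     ([infinite_sum_of_telescoping]), which proves the theorem. *)

Lemma sumR_app l1 l2 : sumR (l1 ++ l2) = sumR l1 + sumR l2.
Proof. induction l1; simpl; [ring | rewrite IHl1; ring]. Qed.

Lemma sumR_plus {X} (f g : X -> R) l :
  sumR (map (fun x => f x + g x) l) = sumR (map f l) + sumR (map g l).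
Proof. induction l; simpl; [ring | rewrite IHl; ring]. Qed.

Lemma sumR_scal {X} c (f : X -> R) l :
  sumR (map (fun x => c * f x) l) = c * sumR (map f l).
Proof. induction l; simpl; [ring | rewrite IHl; ring]. Qed.

Lemma sumR_ext {X} (f g : X -> R) l :
  (forall x, In x l -> f x = g x) -> sumR (map f l) = sumR (map g l).
Proof. induction l; simpl; intros H; auto. rewrite H, IHl; auto. Qed.

Lemma sumR_le {X} (f g : X -> R) l :
  (forall x, In x l -> f x <= g x) -> sumR (map f l) <= sumR (map g l).
Proof.
  induction l; simpl; intros H; [lra |].
  pose proof (H a (or_introl eq_refl)).
  pose proof (IHl (fun x Hx => H x (or_intror Hx))). lra.
Qed.

Lemma sumR_zero {X} (l : list X) : sumR (map (fun _ => 0) l) = 0.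
Proof. induction l; simpl; auto; rewrite IHl; ring. Qed.

Lemma sumR_nonneg {X} (f : X -> R) l :
  (forall x, In x l -> 0 <= f x) -> 0 <= sumR (map f l).
Proof.
  intros H. rewrite <- (sumR_zero l). apply sumR_le; auto.
Qed.

Lemma sumR_swap {X Y} (f : X -> Y -> R) l1 l2 :
  sumR (map (fun x => sumR (map (fun y => f x y) l2)) l1) =
  sumR (map (fun y => sumR (map (fun x => f x y) l1)) l2).
Proof.
  induction l1; simpl; [now rewrite sumR_zero |].
  rewrite IHl1, <- sumR_plus. auto.
Qed.

(* sum_f_R0 G n sums the n+1 first terms. *)
Lemma sum_f_R0_as_sumR (G : nat -> R) n : sum_f_R0 G n = sumR (map G (seq 0 (S n))).
Proof.
  induction n; [simpl; ring |].
  rewrite seq_S, map_app, sumR_app. simpl. rewrite IHn. simpl. ring.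
Qed.

Lemma inb_true x l : inb x l = true <-> In x l.
Proof. unfold inb. destruct (in_dec addr_eq_dec x l); split; intros; auto; congruence. Qed.

Lemma inb_false x l : inb x l = false <-> ~ In x l.
Proof. unfold inb. destruct (in_dec addr_eq_dec x l); split; intros; auto; congruence. Qed.

Lemma inb_cons_same x l : inb x (x :: l) = true.
Proof. apply inb_true; simpl; auto. Qed.

Lemma inb_cons_diff x y l : x <> y -> inb x (y :: l) = inb x l.
Proof.
  intros H. destruct (inb x l) eqn:E.
  - apply inb_true in E; apply inb_true; simpl; auto.
  - apply inb_false in E; apply inb_false; simpl; intros [? | ?]; auto.
Qed.

Lemma cross_multiply a b x y : 0 < x -> 0 < y -> a / x = b / y -> a * y = b * x.
Proof.
  intros Hx Hy H.
  replace a with (a / x * x) by (field; lra). replace b with (b / y * y) by (field; lra).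
  rewrite H. ring.
Qed.
(* Summing [act_weight p l A * g A]
   over the subsets A of l is the expectation of g(A) when every edge of l is
   active independently with probability p; it depends only on how g looks at
   the edges it inspects. *)

Lemma subsets_incl {X} (l : list X) A : In A (subsets l) -> forall y, In y A -> In y l.
Proof.
  revert A; induction l; simpl; intros A HA y Hy.
  - destruct HA as [<- | []]; destruct Hy.
  - apply in_app_or in HA; destruct HA as [HA | HA].
    + apply in_map_iff in HA; destruct HA as [A' [<- HA']].
      destruct Hy as [-> | Hy]; auto. right; eapply IHl; eauto.
    + right; eapply IHl; eauto.
Qed.

Section ActiveSets.
Variable p : R.

Lemma act_weight_nonneg E A : 0 <= p <= 1 -> 0 <= act_weight p E A.
Proof.
  intros Hp. unfold act_weight. induction E; simpl; [lra |].
  apply Rmult_le_pos; auto. destruct (inb a A); lra.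
Qed.

Lemma act_weight_cons_in x l A : ~ In x l ->
  act_weight p (x :: l) (x :: A) = p * act_weight p l A.
Proof.
  intros Hx. unfold act_weight; simpl. rewrite inb_cons_same. f_equal.
  induction l as [|y l IH]; simpl; auto.
  rewrite inb_cons_diff, IH; auto.
  - intros H; apply Hx; simpl; auto.
  - intros ->; apply Hx; simpl; auto.
Qed.

Lemma act_weight_cons_out x l A : ~ In x A ->
  act_weight p (x :: l) A = (1 - p) * act_weight p l A.
Proof. intros Hx. unfold act_weight; simpl. apply inb_false in Hx; rewrite Hx; auto. Qed.

Lemma sum_active_cons x l (g : list addr -> R) : ~ In x l ->
  sumR (map (fun A => act_weight p (x :: l) A * g A) (subsets (x :: l))) =
  p * sumR (map (fun A => act_weight p l A * g (x :: A)) (subsets l)) +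
  (1 - p) * sumR (map (fun A => act_weight p l A * g A) (subsets l)).
Proof.
  intros Hx. simpl. rewrite map_app, sumR_app, map_map. f_equal.
  - rewrite <- sumR_scal. apply sumR_ext. intros A HA.
    rewrite act_weight_cons_in; auto; ring.
  - rewrite <- sumR_scal. apply sumR_ext. intros A HA.
    rewrite act_weight_cons_out; [ring |].
    intros HxA; apply Hx; eapply subsets_incl; eauto.
Qed.

Lemma sum_active_skip x l (g : list addr -> R) : ~ In x l ->
  (forall A, g (x :: A) = g A) ->
  sumR (map (fun A => act_weight p (x :: l) A * g A) (subsets (x :: l))) =
  sumR (map (fun A => act_weight p l A * g A) (subsets l)).
Proof.
  intros Hx Hg. rewrite sum_active_cons; auto.
  rewrite (sumR_ext (fun A => _ * g (x :: A)) (fun A => act_weight p l A * g A));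
    [ring | intros A _; now rewrite Hg].
Qed.

Lemma sum_active_const l (c : R) : NoDup l ->
  sumR (map (fun A => act_weight p l A * c) (subsets l)) = c.
Proof.
  induction l; intros Hl; [unfold act_weight; simpl; ring |].
  inversion Hl; subst. rewrite sum_active_cons, IHl; auto. ring.
Qed.

Lemma sum_active_one l c (G : bool -> R) : NoDup l -> In c l ->
  sumR (map (fun A => act_weight p l A * G (inb c A)) (subsets l)) =
  p * G true + (1 - p) * G false.
Proof.
  induction l as [|a l IH]; intros Hl Hc; [destruct Hc |].
  inversion Hl as [|? ? Ha Hl']; subst.
  destruct (addr_eq_dec a c) as [<- | Hne].
  - rewrite sum_active_cons by auto.
    rewrite (sumR_ext (fun A => _ * G (inb a (a :: A))) (fun A => act_weight p l A * G true))
      by (intros; now rewrite inb_cons_same).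
    rewrite (sumR_ext (fun A => _ * G (inb a A)) (fun A => act_weight p l A * G false)).
    + now rewrite !sum_active_const.
    + intros A HA. rewrite (proj2 (inb_false a A)); auto.
      intros HaA; apply Ha; eapply subsets_incl; eauto.
  - destruct Hc as [-> | Hc]; [congruence |].
    rewrite sum_active_skip by (auto; intros; now rewrite inb_cons_diff).
    auto.
Qed.

Lemma sum_active_two l c1 c2 (G : bool -> bool -> R) :
  NoDup l -> In c1 l -> In c2 l -> c1 <> c2 ->
  sumR (map (fun A => act_weight p l A * G (inb c1 A) (inb c2 A)) (subsets l)) =
  p * p * G true true + p * (1 - p) * G true false + (1 - p) * p * G false true
  + (1 - p) * (1 - p) * G false false.
Proof.
  induction l as [|a l IH]; intros Hl H1 H2 Hne; [destruct H1 |].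
  inversion Hl as [|? ? Ha Hl']; subst.
  assert (Hout : forall A, In A (subsets l) -> inb a A = false).
  { intros A HA. apply inb_false. intros HaA; apply Ha; eapply subsets_incl; eauto. }
  destruct (addr_eq_dec a c1) as [<- | Hn1]; [| destruct (addr_eq_dec a c2) as [<- | Hn2]].
  - destruct H2 as [-> | H2]; [congruence |].
    rewrite sum_active_cons by auto.
    rewrite (sumR_ext (fun A => _ * G (inb a (a :: A)) _)
               (fun A => act_weight p l A * G true (inb c2 A)))
      by (intros; now rewrite inb_cons_same, inb_cons_diff).
    rewrite (sumR_ext (fun A => _ * G (inb a A) _)
               (fun A => act_weight p l A * G false (inb c2 A)))
      by (intros; now rewrite Hout).
    rewrite (sum_active_one l c2 (G true)), (sum_active_one l c2 (G false)); auto. ring.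
  - destruct H1 as [-> | H1]; [congruence |].
    rewrite sum_active_cons by auto.
    rewrite (sumR_ext (fun A => _ * G _ (inb a (a :: A)))
               (fun A => act_weight p l A * G (inb c1 A) true))
      by (intros; now rewrite inb_cons_same, inb_cons_diff).
    rewrite (sumR_ext (fun A => _ * G _ (inb a A))
               (fun A => act_weight p l A * G (inb c1 A) false))
      by (intros; now rewrite Hout).
    rewrite (sum_active_one l c1 (fun b => G b true)), (sum_active_one l c1 (fun b => G b false));
      auto. ring.
  - destruct H1 as [-> | H1]; [congruence |]. destruct H2 as [-> | H2]; [congruence |].
    rewrite sum_active_skip by (auto; intros; now rewrite !inb_cons_diff).
    auto.
Qed.

End ActiveSets.

Lemma subtree_at_nil t : subtree_at t [] = Some t.
Proof. destruct t; reflexivity. Qed.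

Lemma subtree_at_app T v w : subtree_at T (v ++ w) =
  match subtree_at T v with Some t => subtree_at t w | None => None end.
Proof.
  revert T; induction v as [|b v IH]; intros T.
  - destruct T; simpl; destruct w; auto.
  - destruct b, T; simpl; auto.
Qed.

Lemma subtree_at_snoc T v b t : subtree_at T (v ++ [b]) = Some t ->
  exists t', subtree_at T v = Some t' /\ subtree_at t' [b] = Some t.
Proof. rewrite subtree_at_app. destruct (subtree_at T v); [eauto | discriminate]. Qed.

Lemma edges_subtree T v t x : subtree_at T v = Some t -> In x (edges t) -> In (v ++ x) (edges T).
Proof.
  revert T; induction v as [|b v IH]; intros T H Hx.
  - rewrite subtree_at_nil in H; inversion H; subst; auto.
  - destruct b, T; simpl in H; try discriminate; simpl; right;
      first [ apply in_map; eauto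
            | right; apply in_or_app; first [left; apply in_map; eauto | right; apply in_map; eauto]].
Qed.

Lemma child_is_edge T v t b t' : subtree_at T v = Some t -> subtree_at t [b] = Some t' ->
  In (v ++ [b]) (edges T) /\ subtree_at T (v ++ [b]) = Some t'.
Proof.
  intros H1 H2. rewrite subtree_at_app, H1. split; [eapply edges_subtree; [exact H1 |] |];
    destruct b, t; simpl in H2; try discriminate; simpl; auto.
Qed.

Lemma address_is_edge T v t : v <> [] -> subtree_at T v = Some t -> In v (edges T).
Proof.
  intros Hv H. pose proof (app_removelast_last false Hv) as E.
  rewrite E in *. destruct (subtree_at_snoc _ _ _ _ H) as [t' [H1 H2]].
  eapply child_is_edge; eauto.
Qed.

Lemma edges_nonnil T x : In x (edges T) -> x <> [].
Proof.
  destruct T; simpl; intros H; [destruct H | |].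
  - destruct H as [<- | H]; [discriminate |].
    apply in_map_iff in H; destruct H as [y [<- _]]; discriminate.
  - destruct H as [<- | [<- | H]]; try discriminate. apply in_app_or in H.
    destruct H as [H | H]; apply in_map_iff in H; destruct H as [y [<- _]]; discriminate.
Qed.

Lemma NoDup_map_cons (b : bool) (l : list addr) : NoDup l -> NoDup (map (cons b) l).
Proof.
  apply NoDup_map_NoDup_ForallPairs. intros x y _ _ E. now inversion E.
Qed.

Lemma singleton_not_in_shifted (b b' : bool) t : ~ In [b] (map (cons b') (edges t)).
Proof.
  intros H. apply in_map_iff in H. destruct H as [y [Hy Hy']].
  inversion Hy; subst. eapply edges_nonnil; eauto.
Qed.

Lemma NoDup_edges T : NoDup (edges T).
Proof.
  induction T as [|u IH|l IHl r IHr]; simpl.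
  - constructor.
  - constructor; [apply singleton_not_in_shifted | now apply NoDup_map_cons].
  - constructor; [| constructor].
    + intros [H | H]; [discriminate |].
      apply in_app_or in H; destruct H as [H | H]; eapply singleton_not_in_shifted; eauto.
    + intros H. apply in_app_or in H; destruct H as [H | H]; eapply singleton_not_in_shifted; eauto.
    + apply NoDup_app; try now apply NoDup_map_cons.
      intros a H1 H2. apply in_map_iff in H1, H2.
      destruct H1 as [x [<- _]]; destruct H2 as [y [Hy _]]. discriminate.
Qed.

Fixpoint height (t : btree) : nat :=
  match t with
  | Nd0 => 0
  | Nd1 u => S (height u)
  | Nd2 l r => S (Nat.max (height l) (height r))
  end.

Lemma length_address_le_height T v t : subtree_at T v = Some t -> (length v <= height T)%nat.
Proof.
  revert T; induction v as [|b v IH]; intros T H; [simpl; lia |].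
  destruct b, T; simpl in H; try discriminate; simpl; specialize (IH _ H); lia.
Qed.

Lemma children_spec T v c : In c (children T v) ->
  exists t b t', subtree_at T v = Some t /\ c = v ++ [b] /\ subtree_at t [b] = Some t'.
Proof.
  unfold children. destruct (subtree_at T v) as [[|u|l r]|] eqn:E; simpl; try tauto.
  - intros [<- | []]. exists (Nd1 u), false, u; repeat split; auto; apply subtree_at_nil.
  - intros [<- | [<- | []]].
    + exists (Nd2 l r), false, l; repeat split; auto; apply subtree_at_nil.
    + exists (Nd2 l r), true, r; repeat split; auto; apply subtree_at_nil.
Qed.

Lemma snoc_false_neq_true (v : addr) : v ++ [false] <> v ++ [true].
Proof. intros E. apply app_inj_tail in E. destruct E; discriminate. Qed.

Lemma snoc_length_neq (u c : addr) b : length c <> S (length u) -> c <> u ++ [b].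
Proof. intros H E. subst. rewrite length_app in H. simpl in H. lia. Qed.

(* Cycle times.  q := 1 - (1-p)^2 is the probability that at least one of two
   edges is active, so the expected wait 1/q before some outgoing edge of a
   binary vertex becomes active is at most 1/p. *)

Section CycleTime.
Variable p : R.
Hypothesis Hp : 0 < p <= 1.

Lemma inv_p_pos : 0 < 1 / p.
Proof. apply Rdiv_lt_0_compat; lra. Qed.

Lemma two_edge_wait_bounds : 0 < 1 / (1 - (1 - p) ^ 2) <= 1 / p.
Proof.
  assert (p <= 1 - (1 - p) ^ 2) by nra. split.
  - apply Rdiv_lt_0_compat; lra.
  - apply Rmult_le_compat_l; [lra |]. apply Rinv_le_contravar; lra.
Qed.

Lemma tau_nonneg t : 0 <= tau p t.
Proof.
  pose proof two_edge_wait_bounds; pose proof inv_p_pos.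
  induction t; cbn [tau]; unfold Rdiv in *; lra.
Qed.

(* Crossing an edge twice costs 2/p, so a child's cycle time is shorter. *)
Lemma tau_child_le t b t' : subtree_at t [b] = Some t' -> tau p t' + 2 / p <= tau p t.
Proof.
  pose proof two_edge_wait_bounds; pose proof inv_p_pos.
  intros Ht. destruct b, t as [|u|l r]; simpl in Ht; try discriminate;
    rewrite subtree_at_nil in Ht; inversion Ht; subst; cbn [tau];
    try pose proof (tau_nonneg l); try pose proof (tau_nonneg r);
    unfold Rdiv in *; lra.
Qed.

Lemma tau_subtree_le T v t : subtree_at T v = Some t -> tau p t <= tau p T.
Proof.
  revert T; induction v as [|b v IH]; intros T H.
  - rewrite subtree_at_nil in H; inversion H; lra.
  - assert (Hc : exists c, subtree_at T [b] = Some c /\ subtree_at c v = Some t).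
    { destruct b, T; simpl in H |- *; try discriminate; rewrite ?subtree_at_nil; eauto. }
    destruct Hc as [c [Hc Ht]]. pose proof (tau_child_le _ _ _ Hc). pose proof inv_p_pos.
    specialize (IH _ Ht). unfold Rdiv in *; lra.
Qed.

Lemma Lambda_bounds t : Lambda p t <= 0 /\ 0 <= tau p t / 2 + Lambda p t.
Proof.
  pose proof two_edge_wait_bounds as [Q1 Q2]; pose proof inv_p_pos.
  induction t as [|u IH|l IHl r IHr]; cbn [tau Lambda]; [lra | pose proof (tau_nonneg u);
    unfold Rdiv in *; lra |].
  pose proof (tau_nonneg l); pose proof (tau_nonneg r).
  set (tl := tau p l + 2 / p). set (tr := tau p r + 2 / p).
  assert (Hl : 0 < tl) by (unfold tl, Rdiv in *; lra).
  assert (Hr : 0 < tr) by (unfold tr, Rdiv in *; lra).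
  set (a := tl / (tl + tr)).
  assert (Ha : 0 <= a <= 1).
  { unfold a. split; [apply Rmult_le_pos; [lra | left; apply Rinv_0_lt_compat; lra] |].
    apply Rmult_le_reg_r with (tl + tr); [lra |].
    unfold Rdiv; rewrite Rmult_assoc, Rinv_l; lra. }
  replace (tr / (tl + tr)) with (1 - a) by (unfold a; field; lra).
  destruct IHl, IHr.
  assert (a * Lambda p l >= Lambda p l) by nra.
  assert ((1 - a) * Lambda p r >= Lambda p r) by nra.
  assert (a * Lambda p l <= 0) by nra. assert ((1 - a) * Lambda p r <= 0) by nra.
  unfold Rdiv in *. split; lra.
Qed.

End CycleTime.

Definition is_prefix (a x : addr) : bool :=
  if addr_eq_dec (firstn (length a) x) a then true else false.

Lemma is_prefix_nil x : is_prefix [] x = true.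
Proof. unfold is_prefix. simpl. destruct (addr_eq_dec [] []); congruence. Qed.

Lemma is_prefix_cons b a b' x : is_prefix (b :: a) (b' :: x) = Bool.eqb b' b && is_prefix a x.
Proof.
  unfold is_prefix. simpl.
  destruct (addr_eq_dec (b' :: firstn (length a) x) (b :: a)) as [E | E];
    destruct (addr_eq_dec (firstn (length a) x) a) as [E' | E'];
    destruct b, b'; simpl; auto; try (inversion E; congruence); subst; congruence.
Qed.

Lemma is_prefix_of_nil a : is_prefix a [] = match a with [] => true | _ => false end.
Proof. unfold is_prefix. rewrite firstn_nil. destruct a; destruct (addr_eq_dec _ _); congruence. Qed.

Lemma filter_prefix_shift b a b' (L : list addr) :
  filter (is_prefix (b :: a)) (map (cons b') L) =
  if Bool.eqb b' b then map (cons b') (filter (is_prefix a) L) else [].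
Proof.
  rewrite filter_map_swap.
  rewrite (filter_ext _ (fun x => Bool.eqb b' b && is_prefix a x))
    by (intros; apply is_prefix_cons).
  destruct (Bool.eqb b' b); simpl; [reflexivity | now rewrite filter_false].
Qed.

Lemma sumR_map_shift (f : addr -> R) b (L : list addr) :
  sumR (map f (map (cons b) L)) = sumR (map (fun x => f (b :: x)) L).
Proof. now rewrite map_map. Qed.

Lemma sum_below_address T a t (f : addr -> R) : subtree_at T a = Some t ->
  sumR (map f (filter (is_prefix a) (edges T))) =
  (match a with [] => 0 | _ => f a end) + sumR (map (fun x => f (a ++ x)) (edges t)).
Proof.
  revert T t f; induction a as [|b a IH]; intros T t f H.
  - rewrite subtree_at_nil in H; inversion H; subst.
    rewrite (filter_ext _ (fun _ => true)) by apply is_prefix_nil.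
    rewrite filter_true, Rplus_0_l. reflexivity.
  - assert (Hhead : forall b', filter (is_prefix (b :: a)) [[b']] =
              if Bool.eqb b' b then (match a with [] => [[b]] | _ => [] end) else []).
    { intros b'. simpl. rewrite is_prefix_cons, is_prefix_of_nil.
      destruct b, b', a; reflexivity. }
    assert (Hsplit : forall u, subtree_at u a = Some t ->
      (match a with [] => f [b] | _ => 0 end) +
      sumR (map (fun x : addr => f (b :: x)) (filter (is_prefix a) (edges u))) =
      (match b :: a with [] => 0 | _ => f (b :: a) end) +
      sumR (map (fun x => f ((b :: a) ++ x)) (edges t))).
    { intros u Hu. pose proof (IH u t (fun x => f (b :: x)) Hu) as K. cbv beta in K.
      rewrite K. destruct a; simpl; ring. }
    destruct b, T as [|u|l r]; simpl in H; try discriminate; (etransitivity; [| apply (Hsplit _ H)]);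
      cbn [edges].
    all: change ([false] :: ?L) with ([[false]] ++ L);
      try change ([true] :: ?L) with ([[true]] ++ L).
    all: rewrite ?filter_app, ?Hhead, ?filter_prefix_shift; simpl Bool.eqb; cbv iota.
    all: rewrite ?app_nil_r; cbn [app]; rewrite map_app, sumR_app, sumR_map_shift;
      destruct a; simpl; rewrite ?Rplus_0_r; reflexivity.
Qed.

Lemma sum_subtree_edges T c t (f : addr -> R) : subtree_at T c = Some t -> c <> [] ->
  sumR (map f (subtree_edges T c)) = f c + sumR (map (fun x => f (c ++ x)) (edges t)).
Proof.
  intros H Hc. change (subtree_edges T c) with (filter (is_prefix c) (edges T)).
  rewrite (sum_below_address T c t f H). destruct c; [congruence | reflexivity].
Qed.

Section Game.
Variable T : btree.
Variable p : R.
Variable sigma : history -> R.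
Variable eps : addr -> R.
Hypothesis Hp : 0 < p <= 1.
Hypothesis Hsigma : forall h, 0 <= sigma h <= 1.
Hypothesis Hdens : equal_branching_density T p eps.

Definition mass (t : btree) (a : addr) : R := sumR (map (fun x => eps (a ++ x)) (edges t)).

Lemma sumR_mass_shift (a : addr) b (L : list addr) :
  sumR (map (fun x => eps (a ++ x)) (map (cons b) L)) =
  sumR (map (fun x : addr => eps ((a ++ [b]) ++ x)) L).
Proof. rewrite map_map. apply sumR_ext. intros x _. now rewrite <- app_assoc. Qed.

Lemma mass_Nd1 u a : mass (Nd1 u) a = eps (a ++ [false]) + mass u (a ++ [false]).
Proof. unfold mass. cbn [edges map sumR]. now rewrite sumR_mass_shift. Qed.

Lemma mass_Nd2 l r a : mass (Nd2 l r) a =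
  (eps (a ++ [false]) + mass l (a ++ [false])) + (eps (a ++ [true]) + mass r (a ++ [true])).
Proof.
  unfold mass at 1. cbn [edges map sumR]. rewrite map_app, sumR_app, !sumR_mass_shift.
  change (sumR (map _ (edges l))) with (mass l (a ++ [false])).
  change (sumR (map _ (edges r))) with (mass r (a ++ [true])). ring.
Qed.

Lemma eps_nonneg e : In e (edges T) -> 0 <= eps e.
Proof. destruct Hdens as [H _]; auto. Qed.

Lemma mass_nonneg a t : subtree_at T a = Some t -> 0 <= mass t a.
Proof.
  intros H. apply sumR_nonneg. intros x Hx. apply eps_nonneg. eapply edges_subtree; eauto.
Qed.

Definition two_edge_wait : R := 1 / (1 - (1 - p) ^ 2).

(* [tour_cost t a]: the expected eps-weighted time to find the hider during a
   DFS tour of the subtree t at address a, counted from the start of the tour.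
   Crossing an edge takes 1/p on average.  At a binary vertex the searcher
   first waits (mean [two_edge_wait]) for one of the two edges; the formula
   lets the left branch go first, so the mass of the right branch also waits
   for the whole tour of the left edge.  Under the equal branching condition
   the other order gives the same value (see [bellman_two_children]). *)
Fixpoint tour_cost (t : btree) (a : addr) : R :=
  match t with
  | Nd0 => 0
  | Nd1 u => (eps (a ++ [false]) + mass u (a ++ [false])) / p + tour_cost u (a ++ [false])
  | Nd2 l r =>
      ((eps (a ++ [false]) + mass l (a ++ [false])) + (eps (a ++ [true]) + mass r (a ++ [true])))
        * two_edge_wait
      + tour_cost l (a ++ [false]) + tour_cost r (a ++ [true])
      + (eps (a ++ [true]) + mass r (a ++ [true])) * (tau p l + 2 / p)
  end.

(* eps* lives on leaf edges, and tau/2 + Lambda vanishes on a leaf: so the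
   weight of the edge c itself never matters next to the factor tau/2 + Lambda
   of the subtree below it. *)
Lemma edge_weight_irrelevant c tc : subtree_at T c = Some tc -> In c (edges T) ->
  (eps c + mass tc c) * (tau p tc / 2 + Lambda p tc) = mass tc c * (tau p tc / 2 + Lambda p tc).
Proof.
  intros H Hc. destruct tc; [cbn [tau Lambda]; unfold Rdiv; ring | |];
    destruct Hdens as [_ [_ [Hleaf _]]]; rewrite (Hleaf c Hc); try ring;
    unfold is_leaf_edge; rewrite H; discriminate.
Qed.

Lemma equal_branching v l r : subtree_at T v = Some (Nd2 l r) ->
  (eps (v ++ [false]) + mass l (v ++ [false])) * (tau p r + 2 / p) =
  (eps (v ++ [true]) + mass r (v ++ [true])) * (tau p l + 2 / p).
Proof.
  intros H. destruct Hdens as [_ [_ [_ Hbranch]]]. specialize (Hbranch _ _ _ H).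
  destruct (child_is_edge T v (Nd2 l r) false l H) as [_ H0]; [apply subtree_at_nil |].
  destruct (child_is_edge T v (Nd2 l r) true r H) as [_ H1]; [apply subtree_at_nil |].
  rewrite (sum_subtree_edges _ _ _ eps H0), (sum_subtree_edges _ _ _ eps H1) in Hbranch
    by (destruct v; discriminate).
  change (sumR (map _ (edges l))) with (mass l (v ++ [false])) in Hbranch.
  change (sumR (map _ (edges r))) with (mass r (v ++ [true])) in Hbranch.
  pose proof (tau_nonneg p Hp l); pose proof (tau_nonneg p Hp r); pose proof (inv_p_pos p Hp).
  apply cross_multiply; [unfold Rdiv in *; lra .. | exact Hbranch].
Qed.

(* The cost of a tour is the mass times tau/2 + Lambda; this is where the
   recursion defining Lambda comes from. *)
Theorem tour_cost_closed_form t a : subtree_at T a = Some t ->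
  tour_cost t a = mass t a * (tau p t / 2 + Lambda p t).
Proof.
  revert a; induction t as [|u IH|l IHl r IHr]; intros a H.
  - unfold mass; simpl; ring.
  - destruct (child_is_edge T a (Nd1 u) false u H) as [Hc Hs]; [apply subtree_at_nil |].
    cbn [tour_cost]. rewrite (IH _ Hs), mass_Nd1, <- (edge_weight_irrelevant _ _ Hs Hc).
    cbn [tau Lambda]. field. lra.
  - destruct (child_is_edge T a (Nd2 l r) false l H) as [Hc0 Hs0]; [apply subtree_at_nil |].
    destruct (child_is_edge T a (Nd2 l r) true r H) as [Hc1 Hs1]; [apply subtree_at_nil |].
    pose proof (equal_branching _ _ _ H) as Hb.
    cbn [tour_cost]. rewrite (IHl _ Hs0), (IHr _ Hs1), mass_Nd2.
    rewrite <- (edge_weight_irrelevant _ _ Hs0 Hc0), <- (edge_weight_irrelevant _ _ Hs1 Hc1).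
    cbn [tau Lambda]. cbv zeta. unfold two_edge_wait.
    pose proof (tau_nonneg p Hp l); pose proof (tau_nonneg p Hp r); pose proof (inv_p_pos p Hp).
    set (m0 := eps (a ++ [false]) + mass l (a ++ [false])) in *.
    set (m1 := eps (a ++ [true]) + mass r (a ++ [true])) in *.
    set (tl := tau p l + 2 / p) in *. set (tr := tau p r + 2 / p) in *.
    set (q := 1 - (1 - p) ^ 2) in *.
    assert (0 < tl) by (unfold tl, Rdiv in *; lra).
    assert (0 < tr) by (unfold tr, Rdiv in *; lra).
    assert (0 < q) by (unfold q; nra).
    assert (Hm1 : m1 = m0 * tr / tl) by (rewrite Hb; field; lra).
    replace (tau p l) with (tl - 2 / p) by (unfold tl; ring).
    replace (tau p r) with (tr - 2 / p) by (unfold tr; ring).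
    rewrite Hm1. field. repeat split; lra.
Qed.

(* When the searcher is somewhere in T_u, the work
   still owed at u is the tour of the outgoing edges of u not yet traversed:
   its cost, the mass it will find and its expected duration. *)

Record work := Work { work_cost : R; work_mass : R; work_time : R }.

Definition no_work : work := Work 0 0 0.

Definition edge_tour (c : addr) (t : btree) : work :=
  Work ((eps c + mass t c) / p + tour_cost t c) (eps c + mass t c) (tau p t + 2 / p).

Definition pending (u : addr) (tr : list addr) : work :=
  match subtree_at T u with
  | Some (Nd1 t) => if inb (u ++ [false]) tr then no_work else edge_tour (u ++ [false]) t
  | Some (Nd2 l r) =>
      if inb (u ++ [false]) tr then
        (if inb (u ++ [true]) tr then no_work else edge_tour (u ++ [true]) r)
      else (if inb (u ++ [true]) tr then edge_tour (u ++ [false]) l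
            else Work (tour_cost (Nd2 l r) u) (mass (Nd2 l r) u) (tau p (Nd2 l r)))
  | _ => no_work
  end.

Lemma pending_fresh u t tr : subtree_at T u = Some t -> (forall b, ~ In (u ++ [b]) tr) ->
  pending u tr = Work (tour_cost t u) (mass t u) (tau p t).
Proof.
  intros H Hf. unfold pending. rewrite H, !(proj2 (inb_false _ _) (Hf _)).
  destruct t; try reflexivity. unfold edge_tour. now rewrite mass_Nd1.
Qed.

Lemma pending_done u tr : (forall c, In c (children T u) -> In c tr) -> pending u tr = no_work.
Proof.
  unfold children, pending. intros H. destruct (subtree_at T u) as [[|t|l r]|]; auto.
  - rewrite (proj2 (inb_true _ _)); auto. apply H; simpl; auto.
  - rewrite !(proj2 (inb_true _ _)); auto; apply H; simpl; auto.
Qed.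

Lemma pending_other_level (u c : addr) tr : length c <> S (length u) ->
  pending u (c :: tr) = pending u tr.
Proof.
  intros H. unfold pending.
  rewrite !inb_cons_diff; auto; apply not_eq_sym; apply snoc_length_neq; auto.
Qed.

Lemma pending_mass_down v t b tc tr : subtree_at T v = Some t -> subtree_at t [b] = Some tc ->
  ~ In (v ++ [b]) tr ->
  work_mass (pending v tr) =
  work_mass (pending v ((v ++ [b] : addr) :: tr)) + (eps (v ++ [b]) + mass tc (v ++ [b])).
Proof.
  intros H1 H2 H3. unfold pending. rewrite H1.
  pose proof (snoc_false_neq_true v) as Hn. apply inb_false in H3.
  destruct t; destruct b; simpl in H2; try discriminate; rewrite subtree_at_nil in H2;
    inversion H2; subst; rewrite ?inb_cons_same, ?H3;
    rewrite ?(inb_cons_diff (v ++ [true])), ?(inb_cons_diff (v ++ [false])) by auto;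
    rewrite ?H3; simpl; try ring;
    repeat match goal with |- context [if inb ?x ?y then _ else _] => destruct (inb x y) end;
    simpl; rewrite ?mass_Nd2; ring.
Qed.

(* Addresses are handled reversed ([rev v]), so that the parent
   of a vertex is the tail of its reversed address.  Along the path from O to v,
   the pending work of each vertex is charged its own cost, and the pending
   mass above it waits for its duration plus the expected 1/p for crossing the
   edge back up. *)

Fixpoint path_mass (r : list bool) (tr : list addr) : R :=
  match r with
  | [] => work_mass (pending [] tr)
  | _ :: r' => work_mass (pending (rev r) tr) + path_mass r' tr
  end.

Fixpoint path_cost (r : list bool) (tr : list addr) : R :=
  match r with
  | [] => work_cost (pending [] tr)
  | _ :: r' => work_cost (pending (rev r) tr) + path_cost r' tr
               + path_mass r' tr * (work_time (pending (rev r) tr) + 1 / p)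
  end.

Definition potential (v : addr) (tr : list addr) : R := path_cost (rev v) tr.
Definition mass_on_path (v : addr) (tr : list addr) : R := path_mass (rev v) tr.

Definition ancestor_cost (r : list bool) tr (d : R) : R :=
  match r with [] => 0 | _ :: r' => path_cost r' tr + path_mass r' tr * (d + 1 / p) end.
Definition ancestor_mass (r : list bool) tr : R :=
  match r with [] => 0 | _ :: r' => path_mass r' tr end.

Lemma potential_split v tr :
  potential v tr = work_cost (pending v tr) + ancestor_cost (rev v) tr (work_time (pending v tr)).
Proof.
  unfold potential. destruct (rev v) as [|b r] eqn:E.
  - assert (v = []) by (rewrite <- (rev_involutive v), E; auto). subst. simpl. ring.
  - cbn [path_cost]. rewrite <- E, rev_involutive. rewrite E; unfold ancestor_cost; ring.
Qed.

Lemma mass_on_path_split v tr :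
  mass_on_path v tr = work_mass (pending v tr) + ancestor_mass (rev v) tr.
Proof.
  unfold mass_on_path. destruct (rev v) as [|b r] eqn:E.
  - assert (v = []) by (rewrite <- (rev_involutive v), E; auto). subst. simpl. ring.
  - cbn [path_mass]. rewrite <- E, rev_involutive. rewrite E; unfold ancestor_mass. ring.
Qed.

Lemma ancestor_cost_affine r tr d : ancestor_cost r tr d = ancestor_cost r tr 0 + ancestor_mass r tr * d.
Proof. destruct r; simpl; ring. Qed.

Lemma rev_snoc v (b : bool) : rev (v ++ [b]) = b :: rev v.
Proof. rewrite rev_app_distr; reflexivity. Qed.

Lemma potential_child (c v : addr) b tr : c = v ++ [b] -> potential c tr =
  work_cost (pending c tr) + potential v tr
  + mass_on_path v tr * (work_time (pending c tr) + 1 / p).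
Proof.
  intros ->. unfold potential, mass_on_path. rewrite rev_snoc. cbn [path_cost].
  rewrite <- rev_snoc, rev_involutive. reflexivity.
Qed.

Lemma mass_on_path_child (c v : addr) b tr : c = v ++ [b] ->
  mass_on_path c tr = work_mass (pending c tr) + mass_on_path v tr.
Proof.
  intros ->. unfold mass_on_path. rewrite rev_snoc. cbn [path_mass].
  rewrite <- rev_snoc, rev_involutive. reflexivity.
Qed.

Lemma path_other_level r (c : addr) tr : (S (length r) < length c)%nat ->
  path_cost r (c :: tr) = path_cost r tr /\ path_mass r (c :: tr) = path_mass r tr.
Proof.
  induction r as [|b r IH]; intros H.
  - simpl. rewrite pending_other_level; auto. simpl in *; lia.
  - simpl in H. destruct IH as [IH1 IH2]; [lia |]. cbn [path_cost path_mass].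
    rewrite pending_other_level, IH1, IH2; auto.
    rewrite length_rev; simpl; lia.
Qed.

Lemma ancestors_other_level (v : addr) b tr d (c : addr) : c = v ++ [b] ->
  ancestor_cost (rev v) (c :: tr) d = ancestor_cost (rev v) tr d /\
  ancestor_mass (rev v) (c :: tr) = ancestor_mass (rev v) tr.
Proof.
  intros ->. destruct (rev v) as [|b' r] eqn:E; simpl; auto.
  assert (Hl : length v = S (length r)) by (rewrite <- length_rev, E; reflexivity).
  destruct (path_other_level r (v ++ [b]) tr) as [H1 H2]; [rewrite length_app; simpl; lia |].
  now rewrite H1, H2.
Qed.

Definition remaining_mass (tr : list addr) : R :=
  sumR (map (fun e => eps e * (if inb e tr then 0 else 1)) (edges T)).

Lemma remaining_mass_down c tr : In c (edges T) -> ~ In c tr ->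
  remaining_mass (c :: tr) = remaining_mass tr - eps c.
Proof.
  unfold remaining_mass. intros Hc Hn. pose proof (NoDup_edges T) as Hd. revert Hc Hd.
  generalize (edges T). induction l as [|a l IH]; intros Hc Hd; [destruct Hc |].
  inversion Hd; subst. simpl. destruct (addr_eq_dec a c) as [-> | Hne].
  - rewrite inb_cons_same, (proj2 (inb_false _ _) Hn).
    rewrite (sumR_ext _ (fun e => eps e * (if inb e tr then 0 else 1))); [ring |].
    intros x Hx. rewrite inb_cons_diff; auto. intros ->; auto.
  - destruct Hc as [-> | Hc]; [congruence |]. rewrite inb_cons_diff, IH by auto. ring.
Qed.

Inductive reachable : addr -> list addr -> Prop :=
| reach_start : reachable [] []
| reach_down v tr c : reachable v tr -> In c (children T v) -> ~ In c tr ->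
    reachable c (c :: tr)
| reach_up v tr : reachable v tr -> v <> [] -> (forall c, In c (children T v) -> In c tr) ->
    reachable (removelast v) tr.

Lemma reachable_invariant v tr : reachable v tr ->
  (exists t, subtree_at T v = Some t) /\ (v <> [] -> In v tr) /\
  (forall x b, In (x ++ [b]) tr -> x <> [] -> In x tr) /\ remaining_mass tr = mass_on_path v tr.
Proof.
  induction 1 as [|v tr c HR IH Hc Hn|v tr HR IH Hv Hall].
  - split; [exists T; apply subtree_at_nil |]. split; [congruence |]. split; [simpl; tauto |].
    unfold mass_on_path; simpl. rewrite (pending_fresh [] T) by (try apply subtree_at_nil; simpl; tauto).
    simpl. unfold remaining_mass, mass. apply sumR_ext. intros x _. simpl. ring.
  - destruct IH as [[t Ht] [IH2 [IH3 IH4]]].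
    destruct (children_spec _ _ _ Hc) as [t' [b [tc [Ht' [-> Htc]]]]].
    rewrite Ht in Ht'; inversion Ht'; subst t'.
    destruct (child_is_edge _ _ _ _ _ Ht Htc) as [Hce Hcs].
    split; [eauto |]. split; [simpl; auto |]. split.
    + intros x b' [E | E] Hx; [| right; eauto].
      apply app_inj_tail in E. destruct E as [-> _]. right; auto.
    + rewrite remaining_mass_down, IH4, (mass_on_path_child _ v b _ eq_refl), (mass_on_path_split v),
        (mass_on_path_split v) by auto.
      rewrite (proj2 (ancestors_other_level v b tr 0 _ eq_refl)).
      rewrite (pending_mass_down v t b tc tr) by auto.
      rewrite (pending_fresh (v ++ [b]) tc _ Hcs); [simpl; ring |].
      intros b' [E | E].
      * apply (f_equal (@length bool)) in E; rewrite !length_app in E; simpl in E; lia.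
      * apply Hn; apply (IH3 _ _ E); intros E'; destruct v; discriminate.
  - destruct IH as [[t Ht] [IH2 [IH3 IH4]]].
    pose proof (app_removelast_last false Hv) as E.
    set (v' := removelast v) in *. set (b := last v false) in *. clearbody v' b. subst v.
    destruct (subtree_at_snoc _ _ _ _ Ht) as [t' [Ht' _]].
    split; [eauto |]. split; [intros; apply (IH3 _ b); auto |]. split; auto.
    rewrite IH4, (mass_on_path_child _ v' b _ eq_refl), pending_done; auto. simpl; ring.
Qed.

Definition after_move (F : history -> addr -> list addr -> R) (h : history) (v : addr)
  (tr : list addr) (A : list addr) : R :=
  let h' := (v, A) :: h in
  match dfs_move T v tr A with
  | Wait => F h' v tr
  | Down c => F h' c (c :: tr)
  | Up => F h' (removelast v) tr
  | Choose c1 c2 => sigma h' * F h' c1 (c1 :: tr) + (1 - sigma h') * F h' c2 (c2 :: tr)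
  end.

Definition step (F : history -> addr -> list addr -> R) (h : history) (v : addr)
  (tr : list addr) : R :=
  sumR (map (fun A => act_weight p (edges T) A * after_move F h v tr A) (subsets (edges T))).

Fixpoint expect (n : nat) (f : addr -> list addr -> R) (h : history) (v : addr)
  (tr : list addr) : R :=
  match n with
  | O => f v tr
  | S n' => step (fun h' v' tr' => expect n' f h' v' tr') h v tr
  end.

Lemma filter_nil_false {X} (P : X -> bool) l x : filter P l = [] -> In x l -> P x = false.
Proof.
  intros H Hx. destruct (P x) eqn:E; auto.
  assert (In x (filter P l)) by (apply filter_In; auto). rewrite H in *. contradiction.
Qed.

Lemma dfs_down_spec v tr A c : dfs_move T v tr A = Down c ->
  In c (children T v) /\ ~ In c tr.
Proof.
  unfold dfs_move. destruct (filter _ (children T v)) as [|a l] eqn:E.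
  - destruct v; [discriminate |]. destruct (inb _ A); discriminate.
  - destruct (filter _ (a :: l)) as [|c1 [|c2 l2]] eqn:E2; try discriminate.
    intros H; inversion H; subst.
    assert (Hc : In c (a :: l)) by (eapply filter_In; rewrite E2; simpl; auto).
    rewrite <- E in Hc. apply filter_In in Hc. destruct Hc as [Hc Hn]. split; auto.
    apply inb_false. destruct (inb c tr); simpl in *; congruence.
Qed.

Lemma dfs_choose_spec v tr A c1 c2 : dfs_move T v tr A = Choose c1 c2 ->
  (In c1 (children T v) /\ ~ In c1 tr) /\ (In c2 (children T v) /\ ~ In c2 tr).
Proof.
  unfold dfs_move. destruct (filter _ (children T v)) as [|a l] eqn:E.
  - destruct v; [discriminate |]. destruct (inb _ A); discriminate.
  - destruct (filter _ (a :: l)) as [|d1 [|d2 l2]] eqn:E2; try discriminate.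
    intros H; inversion H; subst.
    assert (H1 : In c1 (a :: l)) by (eapply filter_In; rewrite E2; simpl; auto).
    assert (H2 : In c2 (a :: l)) by (eapply filter_In; rewrite E2; simpl; auto).
    rewrite <- E in H1, H2. apply filter_In in H1, H2. destruct H1, H2.
    split; split; auto; apply inb_false;
      [destruct (inb c1 tr) | destruct (inb c2 tr)]; simpl in *; congruence.
Qed.

Lemma dfs_up_spec v tr A : dfs_move T v tr A = Up ->
  v <> [] /\ forall c, In c (children T v) -> In c tr.
Proof.
  unfold dfs_move. destruct (filter _ (children T v)) as [|a l] eqn:E.
  - destruct v as [|b v]; [discriminate |]. intros _. split; [discriminate |].
    intros c Hc. pose proof (filter_nil_false _ _ _ E Hc) as Hf. apply inb_true.
    cbv beta in Hf. destruct (inb c tr); simpl in Hf; congruence.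
  - destruct (filter _ (a :: l)) as [|d1 [|d2 l2]]; discriminate.
Qed.

Lemma step_le_reachable F1 F2 h v tr : reachable v tr ->
  (forall h' v' tr', reachable v' tr' -> F1 h' v' tr' <= F2 h' v' tr') ->
  step F1 h v tr <= step F2 h v tr.
Proof.
  intros HR HF. unfold step. apply sumR_le. intros A _.
  apply Rmult_le_compat_l; [apply act_weight_nonneg; lra |].
  unfold after_move. destruct (dfs_move T v tr A) eqn:E.
  - apply HF; auto.
  - apply dfs_down_spec in E. apply HF. apply (reach_down v); tauto.
  - apply dfs_up_spec in E. apply HF. apply reach_up; tauto.
  - apply dfs_choose_spec in E. pose proof (Hsigma ((v, A) :: h)).
    assert (F1 ((v, A) :: h) a (a :: tr) <= F2 ((v, A) :: h) a (a :: tr))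
      by (apply HF; apply (reach_down v); tauto).
    assert (F1 ((v, A) :: h) a0 (a0 :: tr) <= F2 ((v, A) :: h) a0 (a0 :: tr))
      by (apply HF; apply (reach_down v); tauto).
    nra.
Qed.

Lemma step_ext_reachable F1 F2 h v tr : reachable v tr ->
  (forall h' v' tr', reachable v' tr' -> F1 h' v' tr' = F2 h' v' tr') ->
  step F1 h v tr = step F2 h v tr.
Proof.
  intros HR HF. apply Rle_antisym; apply step_le_reachable; auto;
    intros; rewrite HF; auto; lra.
Qed.

Lemma step_ext F1 F2 h v tr : (forall h' v' tr', F1 h' v' tr' = F2 h' v' tr') ->
  step F1 h v tr = step F2 h v tr.
Proof.
  intros HF. unfold step, after_move. apply sumR_ext. intros A _. f_equal.
  destruct (dfs_move T v tr A); rewrite ?HF; auto.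
Qed.

Lemma step_sum {X} (G : X -> history -> addr -> list addr -> R) (L : list X) h v tr :
  step (fun h' v' tr' => sumR (map (fun x => G x h' v' tr') L)) h v tr =
  sumR (map (fun x => step (G x) h v tr) L).
Proof.
  unfold step. rewrite <- sumR_swap. apply sumR_ext. intros A _.
  rewrite sumR_scal. f_equal. unfold after_move.
  destruct (dfs_move T v tr A); auto. rewrite <- !sumR_scal, <- sumR_plus. auto.
Qed.

Lemma step_scal c F h v tr : step (fun h' v' tr' => c * F h' v' tr') h v tr = c * step F h v tr.
Proof.
  unfold step. rewrite <- sumR_scal. apply sumR_ext. intros A _. unfold after_move.
  destruct (dfs_move T v tr A); ring.
Qed.

Lemma step_plus F1 F2 h v tr :
  step (fun h' v' tr' => F1 h' v' tr' + F2 h' v' tr') h v tr = step F1 h v tr + step F2 h v tr.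
Proof.
  unfold step. rewrite <- sumR_plus. apply sumR_ext. intros A _. unfold after_move.
  destruct (dfs_move T v tr A); ring.
Qed.

Lemma expect_le n f1 f2 : (forall v tr, reachable v tr -> f1 v tr <= f2 v tr) ->
  forall h v tr, reachable v tr -> expect n f1 h v tr <= expect n f2 h v tr.
Proof.
  intros Hf; induction n; intros h v tr HR; simpl; auto. apply step_le_reachable; auto.
Qed.

Lemma expect_zero n h v tr : expect n (fun _ _ => 0) h v tr = 0.
Proof.
  revert h v tr; induction n; intros; simpl; auto.
  rewrite (step_ext _ (fun h' v' tr' => 0 * 0)) by (intros; rewrite IHn; ring).
  rewrite step_scal. ring.
Qed.

Lemma expect_scal n c f h v tr :
  expect n (fun v' tr' => c * f v' tr') h v tr = c * expect n f h v tr.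
Proof.
  revert h v tr; induction n; intros; simpl; auto.
  rewrite (step_ext _ (fun h' v' tr' => c * expect n f h' v' tr')); auto. apply step_scal.
Qed.

Lemma expect_weighted_sum n (L : list addr) (g : addr -> addr -> list addr -> R) h v tr :
  expect n (fun v' tr' => sumR (map (fun e => eps e * g e v' tr') L)) h v tr =
  sumR (map (fun e => eps e * expect n (g e) h v tr) L).
Proof.
  revert h v tr; induction n; intros; simpl; auto.
  rewrite (step_ext _ (fun h' v' tr' => sumR (map (fun e => eps e * expect n (g e) h' v' tr') L)))
    by (intros; apply IHn).
  rewrite step_sum. apply sumR_ext. intros e _.
  apply (step_scal (eps e) (fun h' v' tr' => expect n (g e) h' v' tr')).
Qed.

(* The game's survival probability as an expectation: the hider on e is not
   found during n stages iff e is untraversed after them. *)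

Definition not_traversed (e : addr) (v : addr) (tr : list addr) : R := if inb e tr then 0 else 1.

Lemma expect_not_traversed_found e n h v tr : In e tr -> expect n (not_traversed e) h v tr = 0.
Proof.
  revert h v tr; induction n; intros h v tr H; simpl.
  - unfold not_traversed; rewrite (proj2 (inb_true _ _) H); auto.
  - unfold step. rewrite <- (sumR_zero (subsets (edges T))). apply sumR_ext. intros A _.
    unfold after_move. destruct (dfs_move T v tr A); rewrite ?IHn; simpl; auto; ring.
Qed.

Lemma notfound_as_expectation e n h v tr : ~ In e tr ->
  notfound T p sigma e n h v tr = expect n (not_traversed e) h v tr.
Proof.
  revert h v tr; induction n; intros h v tr H; simpl.
  - unfold not_traversed; rewrite (proj2 (inb_false _ _) H); auto.
  - unfold step. apply sumR_ext. intros A _. f_equal. unfold after_move. cbv zeta.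
    destruct (dfs_move T v tr A).
    + apply IHn; auto.
    + destruct (addr_eq_dec a e) as [-> | Hne].
      * rewrite expect_not_traversed_found; simpl; auto.
      * apply IHn. intros [E | E]; auto.
    + apply IHn; auto.
    + destruct (addr_eq_dec a e) as [-> | Hne]; destruct (addr_eq_dec a0 e) as [-> | Hne'];
        repeat rewrite (expect_not_traversed_found e n _ e (e :: tr)) by (simpl; auto);
        repeat rewrite IHn by (intros [E | E]; auto); auto.
Qed.

Lemma payoff_tail_as_expectation n :
  payoff_tail T p sigma eps n = expect n (fun _ tr => remaining_mass tr) [] [] [].
Proof.
  unfold payoff_tail, remaining_mass.
  rewrite (sumR_ext _ (fun e => eps e * expect n (not_traversed e) [] [] [])).
  - rewrite <- (expect_weighted_sum n (edges T) not_traversed). reflexivity.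
  - intros e _. rewrite notfound_as_expectation; auto.
Qed.

Lemma step_active_const X :
  sumR (map (fun A => act_weight p (edges T) A * X) (subsets (edges T))) = X.
Proof. apply sum_active_const, NoDup_edges. Qed.

Lemma step_active_one c X Y : In c (edges T) ->
  sumR (map (fun A => act_weight p (edges T) A * (if inb c A then X else Y)) (subsets (edges T)))
  = p * X + (1 - p) * Y.
Proof.
  intros Hc. exact (sum_active_one p (edges T) c (fun b => if b then X else Y) (NoDup_edges T) Hc).
Qed.

Lemma step_active_two c1 c2 X11 X10 X01 X00 :
  In c1 (edges T) -> In c2 (edges T) -> c1 <> c2 ->
  sumR (map (fun A => act_weight p (edges T) A *
     (if inb c1 A then (if inb c2 A then X11 else X10) else (if inb c2 A then X01 else X00)))
     (subsets (edges T)))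
  = p * p * X11 + p * (1 - p) * X10 + (1 - p) * p * X01 + (1 - p) * (1 - p) * X00.
Proof.
  intros H1 H2 Hn.
  exact (sum_active_two p (edges T) c1 c2
    (fun b1 b2 => if b1 then (if b2 then X11 else X10) else (if b2 then X01 else X00))
    (NoDup_edges T) H1 H2 Hn).
Qed.

Definition untraversed (v : addr) (tr : list addr) : list addr :=
  filter (fun c => negb (inb c tr)) (children T v).

Lemma dfs_move_finished v tr A : untraversed v tr = [] -> v <> [] ->
  dfs_move T v tr A = if inb v A then Up else Wait.
Proof. unfold untraversed, dfs_move. intros H Hv. rewrite H. destruct v; [congruence | reflexivity]. Qed.

Lemma dfs_move_finished_root tr A : untraversed [] tr = [] -> dfs_move T [] tr A = Wait.
Proof. unfold untraversed, dfs_move. intros H. now rewrite H. Qed.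

Lemma dfs_move_one v tr A c : untraversed v tr = [c] ->
  dfs_move T v tr A = if inb c A then Down c else Wait.
Proof. unfold untraversed, dfs_move. intros H. rewrite H. simpl. now destruct (inb c A). Qed.

Lemma dfs_move_two v tr A c0 c1 : untraversed v tr = [c0; c1] ->
  dfs_move T v tr A = if inb c0 A then (if inb c1 A then Choose c0 c1 else Down c0)
                      else (if inb c1 A then Down c1 else Wait).
Proof. unfold untraversed, dfs_move. intros H. rewrite H. simpl. now destruct (inb c0 A), (inb c1 A). Qed.

Lemma bellman_finished v tr h :
  untraversed v tr = [] -> pending v tr = no_work -> remaining_mass tr = mass_on_path v tr ->
  (v <> [] -> In v (edges T)) ->
  potential v tr = remaining_mass tr + step (fun _ v' tr' => potential v' tr') h v tr.
Proof.
  intros Hu Hl HM He. unfold step. destruct v as [|b0 v0] eqn:Ev.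
  - rewrite (sumR_ext _ (fun A => act_weight p (edges T) A * potential [] tr)).
    + rewrite step_active_const, HM. unfold mass_on_path, potential; simpl.
      rewrite Hl; simpl; ring.
    + intros A _. unfold after_move. now rewrite dfs_move_finished_root.
  - rewrite <- Ev in *. assert (Hv : v <> []) by (subst; discriminate).
    rewrite (sumR_ext _ (fun A => act_weight p (edges T) A *
       (if inb v A then potential (removelast v) tr else potential v tr))).
    2:{ intros A _. unfold after_move. rewrite dfs_move_finished; auto. now destruct (inb v A). }
    rewrite step_active_one by auto. clear Ev b0 v0.
    pose proof (app_removelast_last false Hv) as E.
    set (v' := removelast v) in *. set (b := last v false) in *. clearbody v' b. subst v.
    rewrite HM, (potential_child _ v' b _ eq_refl), (mass_on_path_child _ v' b _ eq_refl), Hl. simpl.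
    pose proof (inv_p_pos p Hp). field. lra.
Qed.

Lemma potential_after_descent (v c : addr) b tr t w : c = v ++ [b] ->
  subtree_at T c = Some t -> (forall b', ~ In (c ++ [b']) tr) -> pending v (c :: tr) = w ->
  potential c (c :: tr) = tour_cost t c + work_cost w + ancestor_cost (rev v) tr 0
    + ancestor_mass (rev v) tr * work_time w
    + (work_mass w + ancestor_mass (rev v) tr) * (tau p t + 1 / p).
Proof.
  intros Hc Hs Hf Hw.
  assert (Hfresh : pending c (c :: tr) = Work (tour_cost t c) (mass t c) (tau p t)).
  { apply pending_fresh; auto. intros b' [E | E]; [| eapply Hf; eauto].
    apply (f_equal (@length bool)) in E. subst c. rewrite !length_app in E; simpl in E; lia. }
  destruct (ancestors_other_level v b tr (work_time w) c Hc) as [Hac Ham].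
  rewrite (potential_child c v b _ Hc), potential_split, mass_on_path_split, Hfresh, Hw, Hac, Ham,
    (ancestor_cost_affine _ _ (work_time w)).
  cbn [work_cost work_mass work_time]. ring.
Qed.

Lemma bellman_one_child (v : addr) tr h (c : addr) b tc : c = v ++ [b] ->
  untraversed v tr = [c] -> pending v tr = edge_tour c tc -> pending v (c :: tr) = no_work ->
  subtree_at T c = Some tc -> (forall b', ~ In (c ++ [b']) tr) -> In c (edges T) ->
  remaining_mass tr = mass_on_path v tr ->
  potential v tr = remaining_mass tr + step (fun _ v' tr' => potential v' tr') h v tr.
Proof.
  intros Hc Hu Hl Hl' Hs Hf He HM. unfold step.
  rewrite (sumR_ext _ (fun A => act_weight p (edges T) A *
       (if inb c A then potential c (c :: tr) else potential v tr))).
  2:{ intros A _. unfold after_move. rewrite (dfs_move_one _ _ _ c); auto. now destruct (inb c A). }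
  rewrite step_active_one by auto.
  rewrite (potential_after_descent v c b tr tc no_work), potential_split, ancestor_cost_affine,
    HM, mass_on_path_split, Hl by auto.
  unfold no_work, edge_tour. cbn [work_cost work_mass work_time].
  pose proof (inv_p_pos p Hp). field. lra.
Qed.

(* Whichever one the DFS takes first, the
   potential afterwards is the same: this is exactly the equal branching
   condition, and it is why the payoff does not depend on the DFS. *)
Lemma bellman_two_children (v : addr) tr h l r :
  subtree_at T v = Some (Nd2 l r) -> ~ In (v ++ [false]) tr -> ~ In (v ++ [true]) tr ->
  (forall b b', ~ In ((v ++ [b]) ++ [b']) tr) -> remaining_mass tr = mass_on_path v tr ->
  potential v tr = remaining_mass tr + step (fun _ v' tr' => potential v' tr') h v tr.
Proof.
  intros H N0 N1 Nf HM.
  set (c0 := v ++ [false] : addr) in *. set (c1 := v ++ [true] : addr) in *.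
  destruct (child_is_edge T v (Nd2 l r) false l H) as [He0 Hs0]; [apply subtree_at_nil |].
  destruct (child_is_edge T v (Nd2 l r) true r H) as [He1 Hs1]; [apply subtree_at_nil |].
  fold c0 in He0, Hs0. fold c1 in He1, Hs1.
  assert (Hneq : c0 <> c1) by apply snoc_false_neq_true.
  assert (Hu : untraversed v tr = [c0; c1]).
  { unfold untraversed, children. rewrite H. simpl. fold c0 c1.
    now rewrite (proj2 (inb_false _ _) N0), (proj2 (inb_false _ _) N1). }
  assert (Hl0 : pending v (c0 :: tr) = edge_tour c1 r).
  { unfold pending. rewrite H. fold c0 c1. rewrite inb_cons_same, inb_cons_diff by auto.
    now rewrite (proj2 (inb_false _ _) N1). }
  assert (Hl1 : pending v (c1 :: tr) = edge_tour c0 l).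
  { unfold pending. rewrite H. fold c0 c1. rewrite inb_cons_same, inb_cons_diff by auto.
    now rewrite (proj2 (inb_false _ _) N0). }
  pose proof (potential_after_descent v c0 false tr l _ eq_refl Hs0 (Nf false) Hl0) as E0.
  pose proof (potential_after_descent v c1 true tr r _ eq_refl Hs1 (Nf true) Hl1) as E1.
  unfold edge_tour in E0, E1. cbn [work_cost work_mass work_time] in E0, E1.
  pose proof (equal_branching _ _ _ H) as Hb. fold c0 c1 in Hb.
  assert (E01 : potential c1 (c1 :: tr) = potential c0 (c0 :: tr)) by (rewrite E0, E1; nra).
  unfold step.
  rewrite (sumR_ext _ (fun A => act_weight p (edges T) A *
     (if inb c0 A then (if inb c1 A then potential c0 (c0 :: tr) else potential c0 (c0 :: tr))
      else (if inb c1 A then potential c1 (c1 :: tr) else potential v tr)))).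
  2:{ intros A _. unfold after_move. rewrite (dfs_move_two _ _ _ c0 c1) by auto.
      destruct (inb c0 A), (inb c1 A); auto. rewrite E01. ring. }
  rewrite step_active_two by auto.
  assert (Hl : pending v tr = Work (tour_cost (Nd2 l r) v) (mass (Nd2 l r) v) (tau p (Nd2 l r)))
    by (apply pending_fresh; auto; intros [|]; auto).
  rewrite E01, E0, potential_split, ancestor_cost_affine, HM, mass_on_path_split, Hl.
  cbn [work_cost work_mass work_time tour_cost tau]. rewrite mass_Nd2. fold c0 c1.
  unfold two_edge_wait. pose proof (inv_p_pos p Hp).
  assert (0 < 1 - (1 - p) ^ 2) by nra.
  field. lra.
Qed.

Theorem bellman v tr h : reachable v tr ->
  potential v tr = remaining_mass tr + step (fun _ v' tr' => potential v' tr') h v tr.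
Proof.
  intros HR. destruct (reachable_invariant _ _ HR) as [[t Ht] [I2 [I3 I4]]].
  assert (He : v <> [] -> In v (edges T)) by (intros; eapply address_is_edge; eauto).
  assert (Hnf : forall b, ~ In (v ++ [b]) tr -> forall b', ~ In ((v ++ [b]) ++ [b']) tr).
  { intros b Hb b' Hin. apply Hb. apply (I3 _ b' Hin). destruct v; discriminate. }
  pose proof (snoc_false_neq_true v) as Hneq.
  destruct t as [|u|l r].
  - apply bellman_finished; auto; unfold untraversed, children, pending; now rewrite Ht.
  - destruct (child_is_edge T v (Nd1 u) false u Ht) as [He0 Hs0]; [apply subtree_at_nil |].
    destruct (inb (v ++ [false]) tr) eqn:E.
    + apply bellman_finished; auto; unfold untraversed, children, pending; rewrite Ht;
        simpl; now rewrite E.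
    + apply inb_false in E. apply (bellman_one_child v tr h (v ++ [false]) false u); auto;
        unfold untraversed, children, pending; rewrite Ht; simpl;
        rewrite ?inb_cons_same, ?(proj2 (inb_false _ _) E); auto.
  - destruct (child_is_edge T v (Nd2 l r) false l Ht) as [He0 Hs0]; [apply subtree_at_nil |].
    destruct (child_is_edge T v (Nd2 l r) true r Ht) as [He1 Hs1]; [apply subtree_at_nil |].
    destruct (inb (v ++ [false]) tr) eqn:E0; destruct (inb (v ++ [true]) tr) eqn:E1.
    + apply bellman_finished; auto; unfold untraversed, children, pending; rewrite Ht;
        simpl; now rewrite E0, E1.
    + apply (bellman_one_child v tr h (v ++ [true]) true r); auto;
        try (apply Hnf; apply inb_false; auto);
        unfold untraversed, children, pending; rewrite Ht; simpl;
        rewrite ?inb_cons_same, ?inb_cons_diff, ?E0, ?E1 by auto; reflexivity.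
    + apply (bellman_one_child v tr h (v ++ [false]) false l); auto;
        try (apply Hnf; apply inb_false; auto);
        unfold untraversed, children, pending; rewrite Ht; simpl;
        rewrite ?inb_cons_same, ?inb_cons_diff, ?E0, ?E1 by auto; reflexivity.
    + apply inb_false in E0. apply inb_false in E1.
      apply (bellman_two_children v tr h l r); auto. intros [|] b'; apply Hnf; auto.
Qed.

Definition cost_rate : R := 1 / p + tau p T / 2.

Definition work_bounded (w : work) : Prop :=
  0 <= work_mass w /\ 0 <= work_cost w <= cost_rate * work_mass w /\ 0 <= work_time w <= tau p T.

Lemma tour_cost_bounds a t : subtree_at T a = Some t ->
  0 <= mass t a /\ 0 <= tour_cost t a <= mass t a * (tau p T / 2).
Proof.
  intros H. rewrite (tour_cost_closed_form _ _ H).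
  pose proof (mass_nonneg _ _ H). pose proof (Lambda_bounds p Hp t) as [L1 L2].
  pose proof (tau_subtree_le p Hp _ _ _ H).
  split; [| split]; [auto | nra | apply Rmult_le_compat_l; lra].
Qed.

Lemma edge_tour_bounded u t b c : subtree_at T u = Some t -> subtree_at t [b] = Some c ->
  work_bounded (edge_tour (u ++ [b]) c).
Proof.
  intros H1 H2. destruct (child_is_edge _ _ _ _ _ H1 H2) as [He Hs].
  pose proof (eps_nonneg _ He). destruct (tour_cost_bounds _ _ Hs).
  pose proof (tau_child_le p Hp _ _ _ H2). pose proof (tau_subtree_le p Hp _ _ _ H1).
  pose proof (tau_nonneg p Hp c). pose proof (inv_p_pos p Hp).
  unfold work_bounded, edge_tour, cost_rate; cbn [work_cost work_mass work_time].
  unfold Rdiv in *. split; [lra |]. split; [split; nra | lra].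
Qed.

Lemma pending_bounded u tr : work_bounded (pending u tr).
Proof.
  pose proof (inv_p_pos p Hp). pose proof (tau_nonneg p Hp T).
  assert (Hnone : work_bounded no_work) by (unfold work_bounded, cost_rate; simpl; unfold Rdiv in *; lra).
  unfold pending. destruct (subtree_at T u) as [[|t|l r]|] eqn:E; auto.
  - destruct (inb _ tr); auto. apply (edge_tour_bounded u (Nd1 t)); auto. apply subtree_at_nil.
  - destruct (inb (u ++ [false]) tr), (inb (u ++ [true]) tr); auto;
      try (eapply (edge_tour_bounded u (Nd2 l r)); eauto; apply subtree_at_nil).
    destruct (tour_cost_bounds _ _ E). pose proof (tau_subtree_le p Hp _ _ _ E).
    pose proof (tau_nonneg p Hp (Nd2 l r)).
    unfold work_bounded, cost_rate; cbn [work_cost work_mass work_time].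
    unfold Rdiv in *. split; [lra |]. split; [split; nra | lra].
Qed.

(* Each level of the path adds at most tau(O) + 1/p of waiting per unit of mass. *)
Definition level_rate : R := tau p T + 1 / p.

Lemma path_cost_bounds r tr : 0 <= path_mass r tr /\ 0 <= path_cost r tr /\
  path_cost r tr <= (cost_rate + INR (length r) * level_rate) * path_mass r tr.
Proof.
  pose proof (inv_p_pos p Hp). pose proof (tau_nonneg p Hp T).
  assert (0 <= cost_rate) by (unfold cost_rate, Rdiv in *; lra).
  assert (0 <= level_rate) by (unfold level_rate; lra).
  induction r as [|b r IH]; cbn [path_mass path_cost length].
  - destruct (pending_bounded [] tr) as [A1 [A2 A3]]. simpl. split; [lra |]. split; lra.
  - destruct (pending_bounded (rev (b :: r)) tr) as [A1 [A2 A3]]. destruct IH as [I1 [I2 I3]].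
    rewrite S_INR. pose proof (pos_INR (length r)).
    assert (path_mass r tr * (work_time (pending (rev (b :: r)) tr) + 1 / p)
              <= path_mass r tr * level_rate) by (unfold level_rate; nra).
    assert (0 <= path_mass r tr * (work_time (pending (rev (b :: r)) tr) + 1 / p)) by nra.
    assert (0 <= (INR (length r) + 1) * level_rate * work_mass (pending (rev (b :: r)) tr))
      by (apply Rmult_le_pos; [apply Rmult_le_pos |]; lra).
    split; [lra |]. split; [lra |]. nra.
Qed.

Definition potential_rate : R := cost_rate + INR (height T) * level_rate.

Lemma potential_rate_nonneg : 0 <= potential_rate.
Proof.
  unfold potential_rate, cost_rate, level_rate. pose proof (inv_p_pos p Hp).
  pose proof (tau_nonneg p Hp T). pose proof (pos_INR (height T)).
  assert (0 <= INR (height T) * (tau p T + 1 / p)) by (apply Rmult_le_pos; lra).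
  unfold Rdiv in *; lra.
Qed.

Theorem potential_bounds v tr : reachable v tr ->
  0 <= remaining_mass tr /\ 0 <= potential v tr <= potential_rate * remaining_mass tr.
Proof.
  intros HR. destruct (reachable_invariant _ _ HR) as [[t Ht] [_ [_ HM]]].
  rewrite HM. unfold potential, mass_on_path. destruct (path_cost_bounds (rev v) tr) as [A1 [A2 A3]].
  split; [auto | split; auto].
  pose proof (length_address_le_height _ _ _ Ht) as Hl. rewrite <- length_rev in Hl.
  apply le_INR in Hl.
  assert (0 <= level_rate) by (unfold level_rate; pose proof (inv_p_pos p Hp);
    pose proof (tau_nonneg p Hp T); lra).
  unfold potential_rate.
  assert (0 <= (INR (height T) - INR (length (rev v))) * level_rate * path_mass (rev v) tr)
    by (apply Rmult_le_pos; [apply Rmult_le_pos |]; lra).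
  nra.
Qed.

Lemma potential_telescoping n : forall v tr h, reachable v tr ->
  potential v tr = sumR (map (fun k => expect k (fun _ tr' => remaining_mass tr') h v tr) (seq 0 n))
                   + expect n (fun v' tr' => potential v' tr') h v tr.
Proof.
  induction n; intros v tr h HR; [simpl; ring |].
  cbn [seq map sumR]. rewrite <- seq_shift, map_map. cbn [expect].
  rewrite <- (step_sum (fun k h' v' tr' => expect k (fun _ tr'0 => remaining_mass tr'0) h' v' tr')).
  rewrite Rplus_assoc, <- step_plus, (bellman v tr h HR) at 1. f_equal.
  apply step_ext_reachable; [auto |]. intros h' v' tr' HR'. apply IHn; auto.
Qed.


Lemma potential_start : potential [] [] = tau p T / 2 + Lambda p T.
Proof.
  unfold potential; simpl.
  rewrite (pending_fresh [] T) by (try apply subtree_at_nil; simpl; tauto). simpl.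
  rewrite (tour_cost_closed_form _ _ (subtree_at_nil T)). destruct Hdens as [_ [Hsum _]].
  unfold mass. simpl. rewrite (sumR_ext _ eps), Hsum by auto. ring.
Qed.

Lemma payoff_partial_sums n : sum_f_R0 (payoff_tail T p sigma eps) n =
  (tau p T / 2 + Lambda p T) - expect (S n) (fun v tr => potential v tr) [] [] [].
Proof.
  pose proof (potential_telescoping (S n) [] [] [] reach_start) as Htele.
  rewrite sum_f_R0_as_sumR, <- potential_start, Htele.
  rewrite (sumR_ext _ (fun k => expect k (fun _ tr => remaining_mass tr) [] [] []))
    by (intros; apply payoff_tail_as_expectation).
  ring.
Qed.

Lemma payoff_tail_nonneg n : 0 <= payoff_tail T p sigma eps n.
Proof.
  rewrite payoff_tail_as_expectation, <- (expect_zero n [] [] []).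
  apply expect_le; [intros v tr HR; apply (potential_bounds v tr HR) | apply reach_start].
Qed.

Lemma expected_potential_bounds n :
  0 <= expect n (fun v tr => potential v tr) [] [] [] <= potential_rate * payoff_tail T p sigma eps n.
Proof.
  rewrite payoff_tail_as_expectation, <- expect_scal, <- (expect_zero n [] [] []).
  split; (apply expect_le; [intros v tr HR; apply (potential_bounds v tr HR) | apply reach_start]).
Qed.

End Game.

Lemma infinite_sum_of_telescoping (G E : nat -> R) (P K : R) :
  0 <= K -> (forall n, 0 <= G n) -> (forall n, 0 <= E n <= K * G n) ->
  (forall n, sum_f_R0 G n = P - E (S n)) -> infinite_sum G P.
Proof.
  intros HK HG HE Hsum.
  assert (Hgrow : Un_growing (sum_f_R0 G)) by (intros n; simpl; pose proof (HG (S n)); lra).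
  assert (Hub : has_ub (sum_f_R0 G)).
  { exists P. intros x [n ->]. rewrite Hsum. pose proof (HE (S n)). lra. }
  destruct (growing_cv _ Hgrow Hub) as [l Hl].
  intros ep Hep. set (ep' := ep / (2 * (K + 1))).
  assert (Hep' : 0 < ep') by (unfold ep'; apply Rdiv_lt_0_compat; lra).
  assert (Hep2 : 2 * (K + 1) * ep' = ep) by (unfold ep'; field; lra).
  destruct (Hl ep' Hep') as [N HN]. exists N. intros n Hn.
  pose proof (HN n Hn) as H1. pose proof (HN (S n) ltac:(lia)) as H2.
  unfold Rdist in *. apply Rabs_def2 in H1. apply Rabs_def2 in H2.
  (* the next term is small, hence so is the leftover *)
  assert (Hnext : G (S n) < 2 * ep') by (simpl in H2; lra).
  rewrite Hsum. replace (P - E (S n) - P) with (- E (S n)) by ring.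
  rewrite Rabs_Ropp. pose proof (HE (S n)) as [E1 E2]. rewrite Rabs_right by lra.
  assert (K * G (S n) <= K * (2 * ep')) by (apply Rmult_le_compat_l; lra).
  nra.
Qed.

Theorem mainTheorem9 (T : btree) (p : R) (sigma : history -> R)
  (eps : addr -> R) :
  0 < p <= 1 ->
  (forall h, 0 <= sigma h <= 1) ->
  equal_branching_density T p eps ->
  infinite_sum (fun n => payoff_tail T p sigma eps n)
    (tau p T / 2 + Lambda p T).
Proof.
  intros Hp Hsigma Hdens.
  apply (infinite_sum_of_telescoping _
           (fun n => expect T p sigma n (fun v tr => potential T p eps v tr) [] [] [])
           _ (potential_rate T p)).
  - apply potential_rate_nonneg; auto.
  - intros n. apply payoff_tail_nonneg; auto.
  - intros n. apply expected_potential_bounds; auto.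
  - intros n. apply payoff_partial_sums; auto.
Qed.
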